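(* Let $A$ be an $m \times m$ normal centrosymmetric nonnegative matrix with eigenvalues $\alpha_1, \ldots, \alpha_m$, where $\alpha_1$ is the Perron root of $A$ and there is a unit nonnegative eigenvector $u_1$ of $A$ for $\alpha_1$ with $Ju_1 = u_1$; let $B$ be an $n \times n$ normal centrosymmetric nonnegative matrix with eigenvalues $\beta_1, \ldots, \beta_n$, where $\beta_1$ is the Perron root of $B$ and there is a unit nonnegative eigenvector $v_1$ of $B$ for $\beta_1$ with $Jv_1 = v_1$. Assume $\alpha_1 \geq \beta_1$. If $a, b$ are real numbers with $\alpha_1 - \beta_1 \geq a \geq b$ and $a + b \leq 0$, then there is a normal centrosymmetric nonnegative matrix with eigenvalues $\alpha_1 - (a+b), \beta_1 + a, \beta_1 + b, \alpha_2, \ldots, \alpha_m, \beta_2, \ldots, \beta_n, \beta_2, \ldots, \beta_n$.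
   Context: $J$ denotes the reverse identity matrix (ones on the anti-diagonal, zeros elsewhere) of the appropriate size. A square matrix $Q$ is centrosymmetric if $JQJ = Q$, nonnegative if all entries are nonnegative, and normal if $QQ^* = Q^*Q$. The Perron root of a nonnegative matrix is its spectral radius, which is an eigenvalue. *)

(* real matrices over an arbitrary real closed field R,
   eigenvalues taken in the algebraic closure R[i] = complex R. *)
From HB Require Import structures.
From mathcomp Require Import all_boot all_order all_algebra.
From mathcomp Require Import complex.
Set Implicit Arguments. Unset Strict Implicit. Unset Printing Implicit Defensive.
Import Order.TTheory GRing.Theory Num.Theory.
Local Open Scope ring_scope.
Local Open Scope complex_scope.

Definition Jmx (R : nzRingType) (n : nat) : 'M[R]_n :=
  \matrix_(i < n, j < n) (j == rev_ord i)%:R.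

Definition centrosymmetric (R : nzRingType) n (A : 'M[R]_n) : Prop :=
  Jmx R n *m A *m Jmx R n = A.

Definition nonneg_mx (R : numDomainType) m n (A : 'M[R]_(m, n)) : Prop :=
  forall i j, 0 <= A i j.

(* for real matrices, A^* = A^T *)
Definition normal_mx (R : nzRingType) n (A : 'M[R]_n) : Prop :=
  A *m A^T = A^T *m A.

Definition cmx (R : rcfType) n (A : 'M[R]_n) : 'M[complex R]_n :=
  map_mx (fun x => x%:C) A.

(* s is the list of eigenvalues of A, with algebraic multiplicities *)
Definition has_spectrum (R : rcfType) n (A : 'M[R]_n) (s : seq (complex R)) : Prop :=
  char_poly (cmx A) = \prod_(z <- s) ('X - z%:P).

(* r is the Perron root (spectral radius, which is an eigenvalue) of A *)
Definition perron_root (R : rcfType) n (A : 'M[R]_n) (r : R) : Prop :=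
  root (char_poly (cmx A)) r%:C /\
  (forall z : complex R, root (char_poly (cmx A)) z -> `|z| <= r%:C).

From HB Require Import structures.
From mathcomp Require Import all_boot all_order all_algebra.
From mathcomp Require Import complex zify ring lra.
Set Implicit Arguments. Unset Strict Implicit. Unset Printing Implicit Defensive.
Import Order.TTheory GRing.Theory Num.Theory.
Local Open Scope ring_scope.

(* Put D = diag(B, A, B) and let X be the (n+m+n) x 3 matrix with orthonormal
   columns (v1,0,0), (0,u1,0), (0,0,v1), so that D X = X L with
   L = diag(beta1, alpha1, beta1).  By Rado's extension of Brauer's theorem,
   C = D + X N X^T keeps the eigenvalues of D outside L and replaces those of L
   by the eigenvalues of L + N.  For the 3 x 3 matrix N with zero diagonal,
   entries x next to the diagonal and y = -b in the corners, the matrix L + N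
   has eigenvalues beta1 + b and the roots of (t - beta1 + b)(t - alpha1) = 2x^2;
   choosing 2x^2 = (a+b)(a+beta1-alpha1) >= 0 makes these alpha1-(a+b) and
   beta1+a.  Normality, centrosymmetry and nonnegativity pass from D and N to
   C because u1, v1 are also eigenvectors of A^T, B^T, because J X J = X, and
   because every factor is nonnegative. *)

Section ExchangeMatrix.
Variable R : nzRingType.

Lemma mulJmxE n p (M : 'M[R]_(n, p)) i j : (Jmx R n *m M) i j = M (rev_ord i) j.
Proof.
rewrite mxE (bigD1 (rev_ord i)) //= mxE eqxx mul1r big1 ?addr0 // => k /negbTE.
by rewrite mxE => ->; rewrite mul0r.
Qed.

Lemma tr_Jmx n : (Jmx R n)^T = Jmx R n.
Proof.
by apply/matrixP => i j; rewrite !mxE eq_sym (can2_eq rev_ordK rev_ordK).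
Qed.

Lemma mulmxJE n p (M : 'M[R]_(p, n)) i j : (M *m Jmx R n) i j = M i (rev_ord j).
Proof.
rewrite mxE (bigD1 (rev_ord j)) //= mxE rev_ordK eqxx mulr1 big1 ?addr0 // => k.
by rewrite mxE eq_sym (can2_eq rev_ordK rev_ordK) => /negbTE ->; rewrite mulr0.
Qed.

Lemma Jmx_conjE m n (M : 'M[R]_(m, n)) i j :
  (Jmx R m *m M *m Jmx R n) i j = M (rev_ord i) (rev_ord j).
Proof. by rewrite mulmxJE mulJmxE. Qed.

Lemma mulJmxK n : Jmx R n *m Jmx R n = 1%:M.
Proof. by apply/matrixP => i j; rewrite mulJmxE !mxE rev_ordK eq_sym. Qed.

Lemma centrosymmetricP n (M : 'M[R]_n) :
  centrosymmetric M <-> forall i j, M (rev_ord i) (rev_ord j) = M i j.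
Proof.
rewrite /centrosymmetric; split => [H i j | H].
  by rewrite -{2}H Jmx_conjE.
by apply/matrixP => i j; rewrite Jmx_conjE H.
Qed.

Lemma Jmx1 : Jmx R 1 = 1%:M.
Proof. by apply/matrixP => i j; rewrite !mxE !ord1. Qed.

End ExchangeMatrix.

Section ThreeBlockIndices.
Variables p r : nat.

Variant split3_spec (i : 'I_(p + r + p)) : Type :=
  | Split3Left (k : 'I_p) of i = lshift p (lshift r k)
  | Split3Mid (k : 'I_r) of i = lshift p (rshift p k)
  | Split3Right (k : 'I_p) of i = rshift (p + r) k.

Lemma split3P i : split3_spec i.
Proof.
case: (split_ordP i) => [j -> | k ->]; last exact: Split3Right.
by case: (split_ordP j) => [k -> | k ->]; [apply: Split3Left | apply: Split3Mid].
Qed.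

Lemma rev_ord3_left (k : 'I_p) :
  rev_ord (lshift p (lshift r k)) = rshift (p + r) (rev_ord k).
Proof. by apply/val_inj => /=; have := ltn_ord k; lia. Qed.

Lemma rev_ord3_mid (k : 'I_r) :
  rev_ord (lshift p (rshift p k) : 'I_(p + r + p)) = lshift p (rshift p (rev_ord k)).
Proof. by apply/val_inj => /=; have := ltn_ord k; lia. Qed.

Lemma rev_ord3_right (k : 'I_p) :
  rev_ord (rshift (p + r) k) = lshift p (lshift r (rev_ord k)).
Proof. by apply/val_inj => /=; have := ltn_ord k; lia. Qed.

End ThreeBlockIndices.

Definition diag3_mx (R : nzRingType) p q r s (P : 'M[R]_(p, q)) (Q : 'M[R]_(r, s))
  : 'M[R]_(p + r + p, q + s + q) :=
  block_mx (block_mx P 0 0 Q) 0 0 P.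

Section Diag3Ring.
Variable R : nzRingType.
Implicit Types p q r s : nat.

Lemma tr_diag3_mx p q r s (P : 'M[R]_(p, q)) (Q : 'M[R]_(r, s)) :
  (diag3_mx P Q)^T = diag3_mx P^T Q^T.
Proof. by rewrite /diag3_mx !tr_block_mx !trmx0. Qed.

Lemma mul_diag3_mx p q r s t u (P : 'M[R]_(p, q)) (Q : 'M[R]_(r, s))
    (P' : 'M[R]_(q, t)) (Q' : 'M[R]_(s, u)) :
  diag3_mx P Q *m diag3_mx P' Q' = diag3_mx (P *m P') (Q *m Q').
Proof. by rewrite /diag3_mx !mulmx_block !(mulmx0, mul0mx, addr0, add0r). Qed.

Lemma diag3_mx_scalar p r (a : R) : diag3_mx (a%:M : 'M_p) (a%:M : 'M_r) = a%:M.
Proof. by rewrite /diag3_mx -!scalar_mx_block. Qed.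

Lemma Jmx_conj_diag3_mx p q r s (P : 'M[R]_(p, q)) (Q : 'M[R]_(r, s)) :
  Jmx R _ *m diag3_mx P Q *m Jmx R _ =
  diag3_mx (Jmx R p *m P *m Jmx R q) (Jmx R r *m Q *m Jmx R s).
Proof.
apply/matrixP => i j; rewrite !Jmx_conjE.
by case: (split3P i) => k ->; case: (split3P j) => l ->;
  rewrite ?rev_ord3_left ?rev_ord3_mid ?rev_ord3_right /diag3_mx
    ?block_mxEul ?block_mxEur ?block_mxEdl ?block_mxEdr ?Jmx_conjE ?mxE.
Qed.

End Diag3Ring.

Lemma char_poly_diag3_mx (R : comNzRingType) p r (P : 'M[R]_p) (Q : 'M[R]_r) :
  char_poly (diag3_mx P Q) = char_poly P * char_poly Q * char_poly P.
Proof. by rewrite /char_poly /diag3_mx !char_block_diag_mx !det_ublock. Qed.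

Lemma map_diag3_mx (R S : nzRingType) (f : {rmorphism R -> S}) p q r s
    (P : 'M[R]_(p, q)) (Q : 'M[R]_(r, s)) :
  map_mx f (diag3_mx P Q) = diag3_mx (map_mx f P) (map_mx f Q).
Proof. by rewrite /diag3_mx !map_block_mx !map_mx0. Qed.

Lemma nonneg_diag3_mx (R : numDomainType) p q r s (P : 'M[R]_(p, q)) (Q : 'M[R]_(r, s)) :
  nonneg_mx P -> nonneg_mx Q -> nonneg_mx (diag3_mx P Q).
Proof.
move=> P_ge0 Q_ge0 i j.
by case: (split3P i) => k ->; case: (split3P j) => l ->;
  rewrite /diag3_mx ?block_mxEul ?block_mxEur ?block_mxEdl ?block_mxEdr ?mxE.
Qed.

Lemma centrosymmetric_diag3_mx (R : nzRingType) p r (P : 'M[R]_p) (Q : 'M[R]_r) :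
  centrosymmetric P -> centrosymmetric Q -> centrosymmetric (diag3_mx P Q).
Proof. by rewrite /centrosymmetric Jmx_conj_diag3_mx => -> ->. Qed.

Lemma normal_diag3_mx (R : comNzRingType) p r (P : 'M[R]_p) (Q : 'M[R]_r) :
  normal_mx P -> normal_mx Q -> normal_mx (diag3_mx P Q).
Proof. by rewrite /normal_mx tr_diag3_mx !mul_diag3_mx => -> ->. Qed.

Lemma tr_mul_self_eq0 (R : realDomainType) k (w : 'cV[R]_k) : w^T *m w = 0 -> w = 0.
Proof.
move=> /matrixP/(_ 0 0); rewrite !mxE => sq_sum0.
have sq0 : \sum_i w i 0 ^+ 2 = 0.
  by rewrite -[RHS]sq_sum0; apply: eq_bigr => i _; rewrite mxE expr2.
apply/matrixP => i j; rewrite ord1 mxE; apply/eqP.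
by rewrite -sqrf_eq0 (psumr_eq0P (fun i _ => sqr_ge0 (w i 0)) sq0).
Qed.

Lemma trmx_mul_unit_cV (R : comNzRingType) k (w : 'cV[R]_k) :
  \sum_i w i 0 ^+ 2 = 1 -> w^T *m w = 1%:M.
Proof.
move=> sq_sum1; apply/matrixP => i j; rewrite !ord1 !mxE /= -sq_sum1.
by apply: eq_bigr => l _; rewrite mxE expr2.
Qed.

Lemma normal_eigenvector_tr (R : realDomainType) k (A : 'M[R]_k) (u : 'cV[R]_k) c :
  normal_mx A -> A *m u = c *: u -> A^T *m u = c *: u.
Proof.
(* |A^T u - c u|^2 = |A u|^2 - c^2 |u|^2 = 0, since A A^T = A^T A. *)
move=> Anormal Au.
have uAt : u^T *m A^T = c *: u^T by rewrite -trmx_mul Au linearZ.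
pose w := A^T *m u - c *: u.
have wt : w^T = u^T *m A - c *: u^T by rewrite /w linearB /= linearZ /= trmx_mul trmxK.
suff : w^T *m w = 0 by move/tr_mul_self_eq0/eqP; rewrite subr_eq0 => /eqP.
rewrite wt /w mulmxBl !mulmxBr !mulmxA -(mulmxA u^T) Anormal mulmxA uAt -!mulmxA Au.
rewrite -!scalemxAl -!scalemxAr !mulmxA uAt -!scalemxAl !scalerA.
by rewrite -mulmxA Au -scalemxAr scalerA !subrr.
Qed.

Lemma nonneg_mulmx (R : numDomainType) m n p (A : 'M[R]_(m, n)) (B : 'M[R]_(n, p)) :
  nonneg_mx A -> nonneg_mx B -> nonneg_mx (A *m B).
Proof. by move=> A_ge0 B_ge0 i j; rewrite mxE sumr_ge0 // => k _; rewrite mulr_ge0. Qed.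

Lemma exists_double_sqr (R : rcfType) (c : R) :
  0 <= c -> exists2 x : R, 0 <= x & x ^+ 2 *+ 2 = c.
Proof.
move=> c_ge0; exists (Num.sqrt (c / 2)); first exact: sqrtr_ge0.
by rewrite sqr_sqrtr ?divr_ge0 // -mulr_natr divfK // pnatr_eq0.
Qed.

Definition rado_mx (R : nzRingType) p k (D : 'M[R]_p) (X : 'M[R]_(p, k)) (N : 'M[R]_k)
  : 'M[R]_p := D + X *m N *m X^T.

Section SylvesterDeterminant.
Variable R : comNzRingType.

Lemma det_sylvester p k (A : 'M[R]_(p, k)) (B : 'M[R]_(k, p)) :
  \det (1%:M + A *m B) = \det (1%:M + B *m A).
Proof.
pose M := block_mx 1%:M (- A) B 1%:M.
have MlE : block_mx 1%:M 0 (- B) 1%:M *m M = block_mx 1%:M (- A) 0 (1%:M + B *m A).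
  rewrite /M mulmx_block !(mul1mx, mulmx1, mul0mx, addr0, add0r, mulNmx, mulmxN).
  by rewrite opprK addNr addrC.
have MrE : M *m block_mx 1%:M 0 (- B) 1%:M = block_mx (1%:M + A *m B) (- A) 0 1%:M.
  by rewrite /M mulmx_block !(mul1mx, mulmx1, mulmx0, add0r, addr0, mulNmx, mulmxN, opprK, addrN).
have := congr1 determinant MlE; have := congr1 determinant MrE.
by rewrite !det_mulmx det_lblock !det_ublock !det1 !(mul1r, mulr1) => -> ->.
Qed.

Lemma det_add1_conj p k (X : 'M[R]_(p, k)) (M : 'M[R]_k) :
  X^T *m X = 1%:M -> \det (1%:M + X *m (M - 1%:M) *m X^T) = \det M.
Proof. by move=> XtX; rewrite -mulmxA det_sylvester -mulmxA XtX mulmx1 addrC subrK. Qed.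

End SylvesterDeterminant.

Section RadoUpdate.
Variable R : comNzRingType.

Lemma char_poly_rado p k (D : 'M[R]_p) (X : 'M[R]_(p, k)) (L N : 'M[R]_k) :
  X^T *m X = 1%:M -> D *m X = X *m L ->
  char_poly (rado_mx D X N) * char_poly L = char_poly D * char_poly (L + N).
Proof.
(* With h = det Q and G = adj Q * F, the matrices C (1 + X (G - 1) X^T) and
   E (1 + X (h - 1) X^T) coincide; by det_add1_conj their determinants are
   det C * det G and det E * h^k, and h^k cancels since h is monic. *)
move=> XtX DX.
pose Xp := map_mx polyC X; pose Np := map_mx polyC N.
pose E := char_poly_mx D; pose F := char_poly_mx L; pose Q := char_poly_mx (L + N).
pose C := char_poly_mx (rado_mx D X N); pose h := \det Q.
have XptXp : Xp^T *m Xp = 1%:M by rewrite map_trmx -map_mxM XtX map_mx1.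
have EXp : E *m Xp = Xp *m F.
  rewrite /E /F /char_poly_mx mulmxBl mulmxBr mul_scalar_mx mul_mx_scalar.
  by rewrite /Xp -!map_mxM DX.
have QE : Q = F - Np by rewrite /Q /F /char_poly_mx map_mxD opprD addrA.
have CE : C = E - Xp *m Np *m Xp^T.
  by rewrite /C /rado_mx /char_poly_mx map_mxD !map_mxM -map_trmx opprD addrA.
have CXp : C *m Xp = Xp *m Q.
  by rewrite CE mulmxBl EXp -!mulmxA XptXp mulmx1 QE -mulmxBr.
pose G := \adj Q *m F.
have CG : C *m (1%:M + Xp *m (G - 1%:M) *m Xp^T) = E + Xp *m (h *: F - F) *m Xp^T.
  have QG : Q *m (G - 1%:M) = h *: F - Q.
    by rewrite mulmxBr mulmx1 /G mulmxA mul_mx_adj mul_scalar_mx.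
  rewrite mulmxDr mulmx1 !mulmxA CXp -(mulmxA Xp Q) QG CE -addrA; congr (_ + _).
  by rewrite -mulNmx -mulmxN -mulmxDl -mulmxDr QE opprB addrCA addKr.
have Eh : E *m (1%:M + Xp *m (h%:M - 1%:M) *m Xp^T) = E + Xp *m (h *: F - F) *m Xp^T.
  by rewrite mulmxDr mulmx1 !mulmxA EXp -(mulmxA Xp F) mulmxBr mulmx1 mul_mx_scalar.
have := congr1 determinant (etrans CG (esym Eh)).
rewrite !det_mulmx !det_add1_conj // det_scalar /G det_mulmx => detCE.
have hk : h * \det (\adj Q) = h ^+ k by rewrite -det_mulmx mul_mx_adj det_scalar.
have hk_reg : GRing.lreg (h ^+ k) := lregX (monic_lreg (char_poly_monic (L + N))).
apply: hk_reg.
rewrite -[in LHS]hk /char_poly -/C -/E -/F -/Q -/h.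
transitivity (h * (\det C * (\det (\adj Q) * \det F))); first by ring.
by rewrite detCE; ring.
Qed.

Lemma normal_rado p k (D : 'M[R]_p) (X : 'M[R]_(p, k)) (L N : 'M[R]_k) :
  D *m X = X *m L -> D^T *m X = X *m L -> L^T = L -> N^T = N ->
  normal_mx D -> normal_mx (rado_mx D X N).
Proof.
move=> DX DtX Lsym Nsym Dnormal.
have XtD : X^T *m D = L *m X^T by apply: trmx_inj; rewrite !trmx_mul trmxK DtX Lsym.
have XtDt : X^T *m D^T = L *m X^T by apply: trmx_inj; rewrite !trmx_mul !trmxK DX Lsym.
have trC : (rado_mx D X N)^T = D^T + X *m N *m X^T.
  by rewrite linearD /= !trmx_mul trmxK Nsym mulmxA.
rewrite /normal_mx trC /rado_mx !mulmxDl !mulmxDr Dnormal !mulmxA DX DtX.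
by rewrite -!(mulmxA _ X^T) XtD XtDt !mulmxA.
Qed.

Lemma centrosymmetric_rado p k (D : 'M[R]_p) (X : 'M[R]_(p, k)) (N : 'M[R]_k) :
  centrosymmetric D -> Jmx R p *m X *m Jmx R k = X -> centrosymmetric N ->
  centrosymmetric (rado_mx D X N).
Proof.
rewrite /centrosymmetric => Dcentro JXJ Ncentro.
have JXtJ : Jmx R k *m X^T *m Jmx R p = X^T.
  by rewrite -{2}JXJ !trmx_mul !tr_Jmx mulmxA.
rewrite /rado_mx mulmxDr mulmxDl Dcentro; congr (_ + _).
have -> : Jmx R p *m (X *m N *m X^T) *m Jmx R p =
    (Jmx R p *m X *m Jmx R k) *m (Jmx R k *m N *m Jmx R k) *m (Jmx R k *m X^T *m Jmx R p).
  by rewrite !mulmxA -!(mulmxA _ (Jmx R k) (Jmx R k)) mulJmxK !mulmx1.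
by rewrite JXJ Ncentro JXtJ.
Qed.

End RadoUpdate.

Lemma nonneg_rado (R : numDomainType) p k (D : 'M[R]_p) (X : 'M[R]_(p, k)) (N : 'M[R]_k) :
  nonneg_mx D -> nonneg_mx X -> nonneg_mx N -> nonneg_mx (rado_mx D X N).
Proof.
move=> D_ge0 X_ge0 N_ge0 i j; rewrite mxE addr_ge0 //.
apply: nonneg_mulmx; first exact: nonneg_mulmx.
by move=> i' j'; rewrite mxE.
Qed.

Lemma map_rado (R S : comNzRingType) (f : {rmorphism R -> S}) p k
    (D : 'M[R]_p) (X : 'M[R]_(p, k)) (N : 'M[R]_k) :
  map_mx f (rado_mx D X N) = rado_mx (map_mx f D) (map_mx f X) (map_mx f N).
Proof. by rewrite /rado_mx map_mxD !map_mxM map_trmx. Qed.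

Definition centro3 (R : nzRingType) (d e x y : R) : 'M[R]_3 :=
  \matrix_(i, j) nth 0 (nth [::] [:: [:: d; x; y]; [:: x; e; x]; [:: y; x; d]] i) j.

Ltac case_ord3 i := case: i => [[|[|[|?]]] ?] //=.

Section Centro3.
Variable R : nzRingType.
Implicit Types d e x y : R.

Lemma tr_centro3 d e x y : (centro3 d e x y)^T = centro3 d e x y.
Proof. by apply/matrixP => i j; rewrite !mxE; case_ord3 i; case_ord3 j. Qed.

Lemma centrosymmetric_centro3 d e x y : centrosymmetric (centro3 d e x y).
Proof. by apply/centrosymmetricP => i j; rewrite !mxE; case_ord3 i; case_ord3 j. Qed.

Lemma diag3_mx_add_centro3 d e x y :
  diag3_mx (d%:M : 'M_1) (e%:M : 'M_1) + centro3 0 0 x y = centro3 d e x y.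
Proof.
apply/matrixP => i j; rewrite [LHS]mxE.
by case: (split3P i) => k ->; case: (split3P j) => l ->;
  rewrite /diag3_mx ?block_mxEul ?block_mxEur ?block_mxEdl ?block_mxEdr !ord1 !mxE /=
    ?addr0 ?add0r.
Qed.

End Centro3.

Lemma map_centro3 (R S : nzRingType) (f : R -> S) (d e x y : R) :
  map_mx f (centro3 d e x y) = centro3 (f d) (f e) (f x) (f y).
Proof. by apply/matrixP => i j; rewrite !mxE; case_ord3 i; case_ord3 j. Qed.

Lemma nonneg_centro3 (R : numDomainType) (d e x y : R) :
  0 <= d -> 0 <= e -> 0 <= x -> 0 <= y -> nonneg_mx (centro3 d e x y).
Proof. by move=> *; move=> i j; rewrite !mxE; case_ord3 i; case_ord3 j. Qed.

Lemma char_poly_centro3 (R : comNzRingType) (d e x y : R) :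
  char_poly (centro3 d e x y) =
  ('X - (d - y)%:P) * (('X - (d + y)%:P) * ('X - e%:P) - (x ^+ 2 *+ 2)%:P).
Proof.
rewrite /char_poly (expand_det_row _ 0) !big_ord_recr big_ord0 /= add0r /cofactor.
rewrite !(expand_det_row _ 0) !big_ord_recr !big_ord0 /= !add0r /cofactor !det_mx11.
rewrite !mxE /= !(rmorphB, rmorphD, rmorphMn, rmorphM, rmorphXn) /=; ring.
Qed.

Local Open Scope complex_scope.

Lemma has_spectrum_perm (R : rcfType) n (M : 'M[R]_n) s s' :
  perm_eq s s' -> has_spectrum M s -> has_spectrum M s'.
Proof. by rewrite /has_spectrum => perm_ss -> ; apply: perm_big. Qed.

Lemma has_spectrum_scalar1 (R : rcfType) (a : R) : has_spectrum (a%:M : 'M_1) [:: a%:C].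
Proof.
by rewrite /has_spectrum /char_poly det_mx11 big_seq1 !mxE /= mulr1n.
Qed.

Lemma has_spectrum_diag3_mx (R : rcfType) p r (P : 'M[R]_p) (Q : 'M[R]_r) s t :
  has_spectrum P s -> has_spectrum Q t -> has_spectrum (diag3_mx P Q) (s ++ t ++ s).
Proof.
rewrite /has_spectrum /cmx map_diag3_mx char_poly_diag3_mx => -> ->.
by rewrite !big_cat /= mulrA.
Qed.

Lemma has_spectrum_rado (R : rcfType) p k (D : 'M[R]_p) (X : 'M[R]_(p, k))
    (L N : 'M[R]_k) s t t' :
  X^T *m X = 1%:M -> D *m X = X *m L ->
  has_spectrum D (t ++ s) -> has_spectrum L t -> has_spectrum (L + N) t' ->
  has_spectrum (rado_mx D X N) (t' ++ s).
Proof.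
rewrite /has_spectrum => XtX DX charD charL charLN.
have charCL : char_poly (cmx (rado_mx D X N)) * char_poly (cmx L) =
              char_poly (cmx D) * char_poly (cmx (L + N)).
  rewrite /cmx map_rado map_mxD; apply: char_poly_rado.
    by rewrite map_trmx -map_mxM XtX map_mx1.
  by rewrite -!map_mxM DX.
apply: (mulIf (monic_neq0 (char_poly_monic (cmx L)))).
by rewrite charCL charD charL charLN !big_cat /=; ring.
Qed.

Lemma has_spectrum_centro3 (R : rcfType) (d e a b x : R) :
  x ^+ 2 *+ 2 = (a + b) * (a + d - e) ->
  has_spectrum (centro3 d e x (- b)) [:: (e - (a + b))%:C; (d + a)%:C; (d + b)%:C].
Proof.
move=> xx; rewrite /has_spectrum /cmx map_centro3 char_poly_centro3 !big_cons big_nil /=.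
have -> : x%:C ^+ 2 *+ 2 = ((a + b) * (a + d - e))%:C by rewrite -xx rmorphMn rmorphXn.
by rewrite !(rmorphB, rmorphD, rmorphN, rmorphM) /=; ring.
Qed.

Theorem corollary3p6 (R : rcfType) (m n : nat)
  (A : 'M[R]_m) (alpha1 : R) (alphas : seq (complex R)) (u1 : 'cV[R]_m)
  (B : 'M[R]_n) (beta1 : R) (betas : seq (complex R)) (v1 : 'cV[R]_n)
  (a b : R) :
  normal_mx A -> centrosymmetric A -> nonneg_mx A ->
  has_spectrum A (alpha1%:C :: alphas) -> perron_root A alpha1 ->
  A *m u1 = alpha1 *: u1 -> nonneg_mx u1 -> \sum_i u1 i 0 ^+ 2 = 1 ->
  Jmx R m *m u1 = u1 ->
  normal_mx B -> centrosymmetric B -> nonneg_mx B ->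
  has_spectrum B (beta1%:C :: betas) -> perron_root B beta1 ->
  B *m v1 = beta1 *: v1 -> nonneg_mx v1 -> \sum_i v1 i 0 ^+ 2 = 1 ->
  Jmx R n *m v1 = v1 ->
  beta1 <= alpha1 ->
  a <= alpha1 - beta1 -> b <= a -> a + b <= 0 ->
  exists C : 'M[R]_(m + n + n),
    [/\ normal_mx C, centrosymmetric C, nonneg_mx C &
      has_spectrum C
        ([:: (alpha1 - (a + b))%:C; (beta1 + a)%:C; (beta1 + b)%:C]
           ++ alphas ++ betas ++ betas)].
Proof.
move=> Anormal Acentro A_ge0 Aspec _ Au u1_ge0 u1_unit Ju1
       Bnormal Bcentro B_ge0 Bspec _ Bv v1_ge0 v1_unit Jv1 _ a_le b_le_a ab_le0.
have [|x x_ge0 xx] := @exists_double_sqr _ ((a + b) * (a + beta1 - alpha1)).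
  by rewrite mulr_le0 //; move: a_le; clear; lra.
have b_le0 : b <= 0 by move: b_le_a ab_le0; clear; lra.
pose D := diag3_mx B A; pose X := diag3_mx v1 u1.
pose L := diag3_mx (beta1%:M : 'M_1) (alpha1%:M : 'M_1).
(* Typed like the columns of X, so that the lemmas on rado_mx unify. *)
pose N : 'M_(1 + 1 + 1) := centro3 0 0 x (- b).
have XtX : X^T *m X = 1%:M.
  by rewrite /X tr_diag3_mx mul_diag3_mx !trmx_mul_unit_cV // diag3_mx_scalar.
have DX : D *m X = X *m L by rewrite /D /X /L !mul_diag3_mx Au Bv !mul_mx_scalar.
have DtX : D^T *m X = X *m L.
  by rewrite /D /X /L tr_diag3_mx !mul_diag3_mx (normal_eigenvector_tr Anormal Au)
    (normal_eigenvector_tr Bnormal Bv) !mul_mx_scalar.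
rewrite [(m + n)%N]addnC; exists (rado_mx D X N); split.
- apply: normal_rado DX DtX _ (tr_centro3 _ _ _ _) (normal_diag3_mx _ _) => //.
  by rewrite /L tr_diag3_mx !tr_scalar_mx.
- apply: centrosymmetric_rado;
    [exact: centrosymmetric_diag3_mx | | exact: centrosymmetric_centro3].
  by rewrite /X Jmx_conj_diag3_mx Jmx1 !mulmx1 Ju1 Jv1.
- apply: nonneg_rado; [exact: nonneg_diag3_mx | exact: nonneg_diag3_mx |].
  by apply: nonneg_centro3; rewrite // oppr_ge0.
- apply: (has_spectrum_rado XtX DX _
             (has_spectrum_diag3_mx (has_spectrum_scalar1 _) (has_spectrum_scalar1 _))).
  + apply: has_spectrum_perm (has_spectrum_diag3_mx Bspec Aspec).
    by apply/permP => f; rewrite /= !count_cat /= count_cat /=; lia.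
  + by rewrite diag3_mx_add_centro3; apply: has_spectrum_centro3.
Qed.
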